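(* Let $n\ge1$, $p$ a prime, and $r$ a composition of $n$. The basis element $\overline{B}_r$ of the $p$-modular descent algebra $\Sigma(n,p)$ is nilpotent if and only if some positive integer occurs at least $p$ times as a component of $r$.
   Context: A composition of $n$ is a sequence of positive integers with sum $n$. The descent algebra $\Sigma_n$ has basis $\{B_q\}$ indexed by compositions of $n$ with multiplication $B_qB_r=\sum_{Z\in S(q,r)}B_{c(Z)}$, where for $q=[a_1,\dots,a_s]$, $r=[b_1,\dots,b_t]$, $S(q,r)$ is the set of $s\times t$ non-negative integer matrices with row sums $a_i$ and column sums $b_j$, and $c(Z)$ is the composition obtained by reading the entries of $Z$ row by row and omitting zeros. Let $\mathcal{Z}_n$ be the subring of integral combinations of the $B_q$ and $\Sigma(n,p)=\mathcal{Z}_n/p\mathcal{Z}_n$, an $\mathbb{F}_p$-algebra with basis $\overline{B}_q$ (images of the $B_q$); equivalently, $\overline{B}_q\overline{B}_r$ is given by the same formula with coefficients reduced mod $p$. *)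

From mathcomp Require Import all_boot all_order all_algebra.
Set Implicit Arguments. Unset Strict Implicit. Unset Printing Implicit Defensive.
Import GRing.Theory.
Local Open Scope ring_scope.

Definition is_composition (n : nat) (r : seq nat) : bool :=
  all (fun x => 0 < x)%N r && (sumn r == n).

Fixpoint allseqs (T : Type) (m : nat) (L : seq T) : seq (seq T) :=
  match m with
  | 0 => [:: [::]]
  | m'.+1 => [seq x :: w | x <- L, w <- allseqs m' L]
  end.

Definition mcol (Z : seq (seq nat)) (j : nat) : seq nat :=
  [seq nth 0%N row j | row <- Z].

(* S(q,r): the (size q) x (size r) nonnegative integer matrices with row sums
   q_i and column sums r_j (entries are bounded by sumn q, so this finite
   enumeration is exhaustive; each matrix occurs exactly once). *)
Definition Smat (q r : seq nat) : seq (seq (seq nat)) :=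
  [seq Z <- allseqs (size q) (allseqs (size r) (iota 0 (sumn q).+1))
     | (map sumn Z == q) && ([seq sumn (mcol Z j) | j <- iota 0 (size r)] == r)].

Definition compZ (Z : seq (seq nat)) : seq nat :=
  [seq x <- flatten Z | x != 0%N].

(* Elements of the descent algebra with coefficients in R, as formal
   R-linear combinations of basis elements B_q (list of (q, coefficient)). *)
Definition fsum (R : Type) := seq (seq nat * R).

Definition coef (R : nmodType) (x : fsum R) (c : seq nat) : R :=
  \sum_(t <- x | t.1 == c) t.2.

Definition basisB (R : semiRingType) (q : seq nat) : fsum R := [:: (q, 1)].

Definition mulB (R : semiRingType) (q r : seq nat) : fsum R :=
  [seq (compZ Z, 1) | Z <- Smat q r].

Definition fmul (R : semiRingType) (x y : fsum R) : fsum R :=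
  flatten [seq [seq (w.1, a.2 * b.2 * w.2) | w <- mulB R a.1 b.1]
          | a <- x, b <- y].

(* fpowS x k = x^(k+1) *)
Definition fpowS (R : semiRingType) (x : fsum R) (k : nat) : fsum R :=
  iter k (fun y => fmul y x) x.

Definition fnilpotent (R : semiRingType) (x : fsum R) : Prop :=
  exists k : nat, forall c : seq nat, coef (fpowS x k) c = 0.

From mathcomp Require Import all_boot all_order all_algebra all_fingroup all_solvable.
Set Implicit Arguments. Unset Strict Implicit. Unset Printing Implicit Defensive.
Import GRing.Theory.

(* In the product B_q B_r every composition c(Z) is at least as long as q, and
   the only one of the same length is q itself, obtained from the matrices with
   one nonzero entry per row, i.e. from the maps f from the parts of q to those
   of r with sum_(f i = t) q_i = r_t.  So the coefficients of the powers of B_r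
   form a triangular system whose diagonal entries count such maps.  The
   permutations of equal parts of r act freely on these maps: if some part
   occurs p times, every diagonal entry vanishes mod p, the shortest length in
   the support of B_r^k grows with k, and B_r^(n+1) = 0.  Otherwise the maps
   from r to r are the permutations fixing r, a group of order prime to p by
   Cauchy's theorem, and the coefficient of B_r in B_r^(k+1) is the k-th power
   of that order. *)

(** * The matrices in S(q, r) and their compositions c(Z) *)

Lemma mem_allseqs (T : eqType) m (L : seq T) w :
  (w \in allseqs m L) = (size w == m) && all (mem L) w.
Proof.
elim: m w => [|m IH] w /=; first by case: w.
apply/allpairsP/idP => [[[y v] /= [Hy Hv ->]]|].
  by move: Hv; rewrite IH /= eqSS Hy => /andP[-> ->].
case: w => [|x w] //=; rewrite eqSS => /andP[Hs /andP[Hx Hw]].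
by exists (x, w); split => //; rewrite IH Hs.
Qed.

Lemma uniq_allseqs (T : eqType) m (L : seq T) : uniq L -> uniq (allseqs m L).
Proof.
move=> UL; elim: m => [|m IH] //=.
by apply: allpairs_uniq => // [[x w] [y v]] _ _ /= [-> ->].
Qed.

Lemma uniq_Smat q r : uniq (Smat q r).
Proof. by apply/filter_uniq/uniq_allseqs/uniq_allseqs/iota_uniq. Qed.

Lemma mem_SmatP q r Z : reflect
  [/\ size Z = size q,
      all (fun row => (size row == size r) && all (fun x => x <= sumn q) row) Z,
      map sumn Z = q & [seq sumn (mcol Z j) | j <- iota 0 (size r)] = r]
  (Z \in Smat q r).
Proof.
rewrite mem_filter mem_allseqs.
have -> : all (mem (allseqs (size r) (iota 0 (sumn q).+1))) Z =
          all (fun row => (size row == size r) && all (fun x => x <= sumn q) row) Z.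
  apply: eq_all => row /=; rewrite mem_allseqs; congr (_ && _).
  apply: eq_all => x; change (x \in iota 0 (sumn q).+1 = (x <= sumn q)).
  by rewrite mem_iota add0n ltnS.
apply: (iffP idP); first by case/andP=> /andP[/eqP-> /eqP->] /andP[/eqP-> ->].
by case=> -> -> -> ->; rewrite !eqxx.
Qed.

Lemma sumn_filter_neq0 (s : seq nat) : sumn [seq x <- s | x != 0] = sumn s.
Proof. by elim: s => //= x s IH; case: eqP => [->|_] //=; rewrite IH. Qed.

Lemma filter_neq0_nil (s : seq nat) : [seq x <- s | x != 0] = [::] ->
  (forall k, nth 0 s k = 0) /\ sumn s = 0.
Proof.
elim: s => [|x s IH] /=; first by split => // [[]].
by case: eqP => // -> /IH [H1 H2]; split => [[|k]|] //=.
Qed.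

Lemma nth_single_neq0 (s : seq nat) : size [seq x <- s | x != 0] = 1 ->
  find (fun x => x != 0) s < size s /\
  forall t, nth 0 s t = if t == find (fun x => x != 0) s then sumn s else 0.
Proof.
elim: s => [|x s IH] //=; case: eqP => [->|Hx] /=.
  by move=> /IH [H1 H2]; split => // [[|t]] //=; rewrite H2.
case E: [seq x <- s | x != 0] => [|y s'] //= _.
by have [H1 H2] := filter_neq0_nil E; split => // [[|t]] //=; rewrite H2 ?addn0.
Qed.

Lemma compZE Z : compZ Z = flatten [seq [seq x <- row | x != 0] | row <- Z].
Proof. by rewrite /compZ filter_flatten. Qed.

Lemma sumn_compZ Z : sumn (compZ Z) = sumn (map sumn Z).
Proof.
rewrite compZE sumn_flatten -map_comp; congr sumn; apply: eq_map => row /=.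
exact: sumn_filter_neq0.
Qed.

Lemma compZ_pos Z : all (fun x => 0 < x) (compZ Z).
Proof. by apply/allP => x; rewrite mem_filter lt0n => /andP[]. Qed.

Lemma size_compZ Z : all (fun row => 0 < sumn row) Z ->
  size Z <= size (compZ Z) /\
  (size (compZ Z) = size Z ->
     compZ Z = map sumn Z /\ all (fun row => size [seq x <- row | x != 0] == 1) Z).
Proof.
rewrite compZE; elim: Z => [|row Z IH] //= /andP[Hr HZ].
have [H1 H2] := IH HZ.
have Hp : 0 < size [seq x <- row | x != 0].
  by move: Hr; rewrite -sumn_filter_neq0; case: [seq x <- row | x != 0].
rewrite size_cat; split; first by rewrite -add1n leq_add.
move=> Hs.
have E1 : size [seq x <- row | x != 0] = 1.
  apply/eqP; rewrite eqn_leq Hp andbT; move: Hs; rewrite -add1n => Hs.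
  by rewrite -(leq_add2r (size Z)) -Hs leq_add2l.
have E2 : size (flatten [seq [seq x <- row0 | x != 0] | row0 <- Z]) = size Z.
  by move: Hs; rewrite E1 add1n => -[].
have [-> ->] := H2 E2; rewrite E1 eqxx; split => //.
move: E1 (sumn_filter_neq0 row); case: [seq x <- row | x != 0] => [|y [|]] //= _.
by rewrite addn0 => ->.
Qed.

Definition mulB_mult (q r c : seq nat) : nat :=
  count (fun Z => compZ Z == c) (Smat q r).

Lemma mulB_mult_eq0 q r c :
  all (fun x => 0 < x) q -> size c <= size q -> c != q -> mulB_mult q r c = 0.
Proof.
move=> Hq Hs Hne; apply/eqP; rewrite -leqn0 leqNgt -has_count; apply/hasPn => Z HZ.
apply/negP => /eqP Hc; case/mem_SmatP: HZ => HsZ _ HsumZ _.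
have Hpos : all (fun row => 0 < sumn row) Z by rewrite -all_map HsumZ.
have [H1 H2] := size_compZ Hpos.
have Hsz : size (compZ Z) = size Z by apply/eqP; rewrite eqn_leq H1 Hc HsZ Hs.
by have [H3 _] := H2 Hsz; move/eqP: Hne; apply; rewrite -Hc H3.
Qed.

(** * Coefficients of products *)

Section Coefficients.
Variable R : nzSemiRingType.
Local Open Scope ring_scope.

Lemma coef_nil c : coef ([::] : fsum R) c = 0.
Proof. by rewrite /coef big_nil. Qed.

Lemma coef_cons (a : seq nat * R) x c :
  coef (a :: x) c = (if a.1 == c then a.2 else 0) + coef x c.
Proof. by rewrite /coef big_cons; case: ifP; rewrite ?add0r. Qed.

Lemma coef_basisB q c : coef (basisB R q) c = (q == c)%:R.
Proof. by rewrite coef_cons coef_nil addr0; case: eqP. Qed.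

Lemma coef_notin (x : fsum R) c : c \notin map fst x -> coef x c = 0.
Proof.
elim: x => [|a x IH]; first by rewrite coef_nil.
rewrite /= inE negb_or => /andP[H1 H2]; rewrite coef_cons IH // addr0.
by rewrite eq_sym (negbTE H1).
Qed.

Lemma coef_flatten (xs : seq (fsum R)) c :
  coef (flatten xs) c = \sum_(x <- xs) coef x c.
Proof. by rewrite /coef big_flatten. Qed.

Lemma coef_scaled_mulB (k : R) q r c :
  coef [seq (w.1, k * w.2) | w <- mulB R q r] c = k * (mulB_mult q r c)%:R.
Proof.
rewrite /coef /mulB /mulB_mult -map_comp big_map.
elim: (Smat q r) => [|Z s IH]; first by rewrite big_nil mulr0.
rewrite big_cons /= IH; case: ifP => _; last by rewrite add0n.
by rewrite add1n mulrS mulrDr mulr1.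
Qed.

Lemma coef_fmul (x y : fsum R) c :
  coef (fmul x y) c = \sum_(a <- x) \sum_(b <- y) a.2 * b.2 * (mulB_mult a.1 b.1 c)%:R.
Proof.
rewrite /fmul coef_flatten; elim: x => [|a x IH]; first by rewrite !big_nil.
rewrite /= big_cat big_cons IH; congr (_ + _); rewrite big_map.
by apply: eq_bigr => b _; rewrite -coef_scaled_mulB.
Qed.

Lemma sum_coef_regroup (x : fsum R) (g : seq nat -> R) (s : seq (seq nat)) :
  uniq s -> {subset map fst x <= s} ->
  \sum_(a <- x) a.2 * g a.1 = \sum_(q <- s) coef x q * g q.
Proof.
move=> Us; elim: x => [|a x IH] Hs.
  by rewrite big_nil big1 // => q _; rewrite coef_nil mul0r.
rewrite big_cons IH; last by move=> q Hq; apply: Hs; rewrite /= inE Hq orbT.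
have Ha : a.1 \in s by apply: Hs; rewrite /= inE eqxx.
under [RHS]eq_bigr => q _ do rewrite coef_cons mulrDl.
rewrite big_split /=; congr (_ + _).
rewrite (bigD1_seq a.1) //= eqxx big1 ?addr0 // => q /negbTE.
by rewrite eq_sym => ->; rewrite mul0r.
Qed.

Lemma coef_fmul_basisB (x : fsum R) r c (s : seq (seq nat)) :
  uniq s -> {subset map fst x <= s} ->
  coef (fmul x (basisB R r)) c = \sum_(q <- s) coef x q * (mulB_mult q r c)%:R.
Proof.
move=> Us Hs; rewrite coef_fmul -(sum_coef_regroup (fun q => (mulB_mult q r c)%:R) Us Hs).
by apply: eq_bigr => a _; rewrite big_seq1 /= mulr1.
Qed.

End Coefficients.

(** * Diagonal multiplicities as counts of merging maps *)

Lemma nth_le_sumn (s : seq nat) i : nth 0 s i <= sumn s.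
Proof.
elim: s i => [|x s IH] [|i] //=; first exact: leq_addr.
exact: leq_trans (IH i) (leq_addl _ _).
Qed.

Lemma sumn_indicator (v a : nat) (s : seq nat) :
  sumn [seq (if v == t then a else 0) | t <- s] = a * count (pred1 v) s.
Proof.
elim: s => [|t s IH] /=; first by rewrite muln0.
by rewrite IH mulnDr eq_sym; case: eqP; rewrite ?muln1 ?muln0.
Qed.

Lemma filter_indicator (v a : nat) (s : seq nat) : a != 0 ->
  [seq x <- [seq (if v == t then a else 0) | t <- s] | x != 0] = nseq (count (pred1 v) s) a.
Proof.
move=> Ha; elim: s => [|t s IH] //=.
by case: (eqVneq v t) => [E|H]; rewrite /= ?Ha IH.
Qed.

Lemma count_pred1_iota v l : v < l -> count (pred1 v) (iota 0 l) = 1.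
Proof. by move=> H; rewrite count_uniq_mem ?iota_uniq // mem_iota /= add0n H. Qed.

Definition merge_maps (q r : seq nat) : {set {ffun 'I_(size q) -> 'I_(size r)}} :=
  [set f : {ffun 'I_(size q) -> 'I_(size r)} |
    [forall t, \sum_(i | f i == t) nth 0 q i == nth 0 r t]].

Definition mx_of_map (q r : seq nat) (f : {ffun 'I_(size q) -> 'I_(size r)}) :=
  [seq [seq (if val (f i) == t then nth 0 q i else 0) | t <- iota 0 (size r)]
  | i <- enum 'I_(size q)].

Section MergeMaps.
Variables q r : seq nat.
Implicit Type f : {ffun 'I_(size q) -> 'I_(size r)}.

Lemma size_mx_of_map f : size (mx_of_map f) = size q.
Proof. by rewrite size_map size_enum_ord. Qed.

Lemma nth_mx_of_map f (i : 'I_(size q)) :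
  nth [::] (mx_of_map f) i =
  [seq (if val (f i) == t then nth 0 q i else 0) | t <- iota 0 (size r)].
Proof. by rewrite (nth_map i) ?size_enum_ord ?ltn_ord // nth_ord_enum. Qed.

Lemma entry_mx_of_map f (i : 'I_(size q)) t : t < size r ->
  nth 0 (nth [::] (mx_of_map f) i) t = if val (f i) == t then nth 0 q i else 0.
Proof. by move=> Ht; rewrite nth_mx_of_map (nth_map 0) ?size_iota // nth_iota. Qed.

Lemma col_mx_of_map f (t : 'I_(size r)) :
  sumn (mcol (mx_of_map f) t) = \sum_(i | f i == t) nth 0 q i.
Proof.
rewrite /mcol /mx_of_map -map_comp.
rewrite (eq_map (g := fun i : 'I_(size q) => if f i == t then nth 0 q i else 0)).
  by rewrite sumnE big_map big_enum [RHS]big_mkcond.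
by move=> i /=; rewrite (nth_map 0) ?size_iota // nth_iota //= add0n.
Qed.

Lemma mx_of_map_Smat f : f \in merge_maps q r -> mx_of_map f \in Smat q r.
Proof.
rewrite inE => /forallP HX; apply/mem_SmatP; split.
- exact: size_mx_of_map.
- apply/allP => row /mapP [i _ ->]; rewrite size_map size_iota eqxx /=.
  by apply/allP => x /mapP [t _ ->]; case: ifP => // _; exact: nth_le_sumn.
- apply: (@eq_from_nth _ 0); rewrite size_map ?size_mx_of_map // => i Hi.
  rewrite (nth_map [::]) ?size_mx_of_map // -[i]/(val (Ordinal Hi)).
  by rewrite nth_mx_of_map sumn_indicator (count_pred1_iota (ltn_ord _)) muln1.
- apply: (@eq_from_nth _ 0); rewrite size_map ?size_iota // => t Ht.
  rewrite (nth_map 0) ?size_iota // nth_iota // add0n.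
  by rewrite -[t]/(val (Ordinal Ht)) col_mx_of_map; apply/eqP/HX.
Qed.

Hypothesis q_pos : all (fun x => 0 < x) q.

Lemma compZ_mx_of_map f : compZ (mx_of_map f) = q.
Proof.
rewrite compZE /mx_of_map -map_comp.
rewrite (eq_map (g := fun i : 'I_(size q) => [:: nth 0 q i])).
  rewrite flatten_map1 -[RHS](mkseq_nth 0 q) /mkseq -val_enum_ord -map_comp.
  by apply: eq_map => i.
move=> i /=; rewrite filter_indicator ?count_pred1_iota //.
by rewrite -lt0n; apply: (allP q_pos); rewrite mem_nth.
Qed.

Lemma mx_of_map_inj : injective (@mx_of_map q r).
Proof.
move=> f g E; apply/ffunP => i; apply: val_inj.
have := entry_mx_of_map g i (ltn_ord (f i)); rewrite -E entry_mx_of_map // eqxx.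
case: eqP => [->|_] // H.
by have := allP q_pos (nth 0 q i) (mem_nth 0 (ltn_ord i)); rewrite H.
Qed.

Lemma Smat_mx_of_map Z : Z \in Smat q r -> compZ Z = q ->
  exists2 f, f \in merge_maps q r & Z = mx_of_map f.
Proof.
move=> /mem_SmatP [HsZ Hrows HsumZ Hcol] HcZ.
have Hpos : all (fun row => 0 < sumn row) Z by rewrite -all_map HsumZ.
have [_ /(_ _)/proj2/allP single] := size_compZ Hpos.
have {}single : forall row, row \in Z -> size [seq x <- row | x != 0] = 1.
  by move=> row /(single _) /eqP; apply; rewrite HcZ HsZ.
have Hrow : forall i : 'I_(size q),
    find (fun x => x != 0) (nth [::] Z i) < size r /\
    forall t, nth 0 (nth [::] Z i) t =
       if t == find (fun x => x != 0) (nth [::] Z i) then nth 0 q i else 0.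
  move=> i; have Hi : nth [::] Z i \in Z by rewrite mem_nth // HsZ.
  have [A B] := nth_single_neq0 (single _ Hi).
  have /andP[/eqP Hsz _] := allP Hrows _ Hi.
  split=> [|t]; first by rewrite -Hsz.
  rewrite B; have := f_equal (fun s => nth 0 s i) HsumZ.
  by rewrite /= (nth_map [::]) ?HsZ // => ->.
pose f := [ffun i => Ordinal (proj1 (Hrow i))].
have EZ : Z = mx_of_map f.
  apply: (@eq_from_nth _ [::]); rewrite ?size_mx_of_map // => i Hi0.
  have Hi : i < size q by rewrite -HsZ.
  rewrite -[i]/(val (Ordinal Hi)) nth_mx_of_map; set i' := Ordinal Hi.
  have /andP[/eqP Hsz _] := allP Hrows _ (mem_nth [::] Hi0).
  apply: (@eq_from_nth _ 0); rewrite ?size_map ?size_iota // => t Ht.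
  have Ht2 : t < size r by rewrite -Hsz.
  rewrite (nth_map 0) ?size_iota // nth_iota // add0n (proj2 (Hrow i')) ffunE /=.
  by rewrite eq_sym.
exists f => //; rewrite inE; apply/forallP => t; rewrite -col_mx_of_map -EZ.
have := f_equal (fun s => nth 0 s t) Hcol => /=.
by rewrite (nth_map 0) ?size_iota // nth_iota //= add0n => ->.
Qed.

Lemma mulB_mult_diag : mulB_mult q r q = #|merge_maps q r|.
Proof.
rewrite /mulB_mult -size_filter cardE -(size_map (@mx_of_map q r)).
apply/perm_size/uniq_perm.
- exact/filter_uniq/uniq_Smat.
- by rewrite (map_inj_uniq mx_of_map_inj) enum_uniq.
move=> Z; rewrite mem_filter; apply/andP/mapP => [[/eqP Hc HZ]|[f Hf ->]].
  by have [f Hf ->] := Smat_mx_of_map HZ Hc; exists f; rewrite ?mem_enum.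
by rewrite compZ_mx_of_map mx_of_map_Smat // -mem_enum.
Qed.

End MergeMaps.

(** * Counting merging maps modulo p *)

Lemma card_nth_eq (r : seq nat) v :
  #|[set u : 'I_(size r) | nth 0 r u == v]| = count_mem v r.
Proof.
rewrite cardE /enum_mem size_filter.
have -> : count_mem v r = count_mem v (mkseq (nth 0 r) (size r)) by rewrite mkseq_nth.
rewrite /mkseq -val_enum_ord -map_comp count_map enumT.
by apply: eq_count => u /=; rewrite inE.
Qed.

Lemma surj_inj (T : finType) (f : T -> T) : (forall y, exists x, f x = y) -> injective f.
Proof.
move=> Hs; apply/injectiveP/card_uniqP; rewrite size_map -cardT.
apply: eq_card => y; rewrite [RHS]inE; have [x <-] := Hs y; apply/mapP; exists x => //.
by rewrite mem_enum.
Qed.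

Definition postcomp j l (f : {ffun 'I_j -> 'I_l}) (s : {perm 'I_l}) : {ffun 'I_j -> 'I_l} :=
  [ffun i => s (f i)].

Lemma postcomp1 j l : (@postcomp j l)^~ 1%g =1 id.
Proof. by move=> f; apply/ffunP => i; rewrite ffunE perm1. Qed.

Lemma postcompM j l (f : {ffun 'I_j -> 'I_l}) : act_morph (@postcomp j l) f.
Proof. by move=> a b; apply/ffunP => i; rewrite !ffunE permM. Qed.

Definition postcomp_act j l := TotalAction (@postcomp1 j l) (@postcompM j l).

Lemma sum_perm_fiber n (s : {perm 'I_n}) (F : 'I_n -> nat) t :
  \sum_(i | s i == t) F i = F (s^-1%g t).
Proof.
rewrite (big_pred1 (s^-1%g t)) // => i /=.
by apply/eqP/eqP => [<-|->]; rewrite ?permK ?permKV.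
Qed.

Section MergeMapsModp.
Variables q r : seq nat.
Hypothesis r_pos : all (fun x => 0 < x) r.

Lemma merge_map_surj f : f \in merge_maps q r -> forall t, exists i, f i = t.
Proof.
rewrite inE => /forallP HX t.
case: (pickP (fun i => f i == t)) => [i /eqP Hi|H0]; first by exists i.
have := HX t; rewrite big_pred0 // eq_sym => /eqP Ht.
by have := allP r_pos _ (mem_nth 0 (ltn_ord t)); rewrite Ht.
Qed.

Lemma postcomp_merge_maps f (s : {perm 'I_(size r)}) : f \in merge_maps q r ->
  (forall t, nth 0 r (s t) = nth 0 r t) -> postcomp f s \in merge_maps q r.
Proof.
rewrite !inE => /forallP HX Hs; apply/forallP => t.
rewrite (eq_bigl (fun i => f i == s^-1%g t)); last first.
  by move=> i; rewrite ffunE; apply/eqP/eqP => [<-|->]; rewrite ?permK ?permKV.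
by rewrite (eqP (HX _)) -{2}(permKV s t) Hs.
Qed.

Lemma nth_perm_on_fiber m (s : {perm 'I_(size r)}) :
  perm_on [set t : 'I_(size r) | nth 0 r t == m] s ->
  forall t, nth 0 r (s t) = nth 0 r t.
Proof.
move=> Hs t; case: (boolP (t \in [set t : 'I_(size r) | nth 0 r t == m])) => Ht.
  have := Ht; rewrite -(perm_closed _ Hs) !inE => /eqP ->.
  by move: Ht; rewrite inE => /eqP ->.
by rewrite (out_perm Hs Ht).
Qed.

(* The symmetric group on the positions of r equal to m acts freely on the
   merging maps, since these are onto. *)
Lemma dvdn_card_merge_maps p m :
  prime p -> p <= count_mem m r -> p %| #|merge_maps q r|.
Proof.
move=> Pp Hc.
set T := [set t : 'I_(size r) | nth 0 r t == m].
set H := Group (@Sym_group_set _ T).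
set to := postcomp_act (size q) (size r).
have HH : p %| #|H| by rewrite (@perm.card_Sym _ T) card_nth_eq dvdn_fact ?prime_gt0.
have Hacts : [acts H, on merge_maps q r | to].
  apply/actsP => s Hs f /=; apply/idP/idP => Hf.
    rewrite -(actK to s f); apply: postcomp_merge_maps => //.
    by apply: (@nth_perm_on_fiber m); have := groupVr Hs; rewrite inE.
  by apply: postcomp_merge_maps => //; apply: (@nth_perm_on_fiber m); move: Hs; rewrite inE.
rewrite -(acts_sum_card_orbit Hacts); apply: dvdn_sum => O /imsetP [f Hf ->].
have free : #|('C_H[f | to])%g| = 1.
  apply/eqP; rewrite (cardsD1 1%g) group1 /= add1n eqSS; apply/eqP.
  apply: eq_card0 => s; rewrite !inE; apply/negP => /and4P[Hs1 _ _].
  rewrite sub1set inE => /eqP Hsf.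
  case/negP: Hs1; apply/eqP/permP => t; rewrite perm1.
  have [i <-] := merge_map_surj Hf t.
  by have := f_equal (fun g : {ffun _ -> _} => g i) Hsf; rewrite /= ffunE.
by have := card_orbit_stab to H f; rewrite free muln1 => ->.
Qed.

End MergeMapsModp.

Definition nth_stab (r : seq nat) : {set {perm 'I_(size r)}} :=
  [set s : {perm 'I_(size r)} | [forall t, nth 0 r (s t) == nth 0 r t]].

Lemma nth_stab_group r : group_set (nth_stab r).
Proof.
apply/group_setP; split => [|s u]; rewrite !inE; first by apply/forallP => t; rewrite perm1.
move=> /forallP Hs /forallP Hu; apply/forallP => t.
by rewrite permM (eqP (Hu _)) (eqP (Hs _)).
Qed.

Lemma card_merge_maps_diag r :
  all (fun x => 0 < x) r -> #|merge_maps r r| = #|nth_stab r|.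
Proof.
move=> Hr; have -> : merge_maps r r = [set val s | s in nth_stab r].
  apply/setP => f; apply/idP/imsetP => [Hf | [s Hs ->]].
    have inj := surj_inj (merge_map_surj Hr Hf).
    exists (perm inj); last first.
      by apply/ffunP => i; rewrite -[val (perm inj)]/(pval (perm inj)) pvalE permE.
    rewrite inE; apply/forallP => t0; move: Hf; rewrite inE => /forallP /(_ (perm inj t0)).
    rewrite (eq_bigl (fun i => perm inj i == perm inj t0)); last by move=> i; rewrite !permE.
    by rewrite sum_perm_fiber permK eq_sym.
  rewrite inE; apply/forallP => t.
  rewrite (eq_bigl (fun i => s i == t)); last by move=> i; rewrite -[val s]/(pval s) pvalE.
  rewrite (sum_perm_fiber s (fun i => nth 0 r i) t).
  by move: Hs; rewrite inE => /forallP /(_ (s^-1%g t)); rewrite permKV eq_sym.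
by rewrite card_imset //; apply: val_inj.
Qed.

(* An element of order p would have an orbit of size p inside a set of
   positions carrying equal parts. *)
Lemma ndvdn_card_nth_stab r p :
  prime p -> {in r, forall m, count_mem m r < p} -> ~~ (p %| #|nth_stab r|).
Proof.
move=> Pp Hc; apply/negP => Hd.
have [s Hs Hos] := @Cauchy _ p (Group (nth_stab_group r)) Pp Hd.
case: (pickP (fun t => s t != t)) => [t Ht|H1]; last first.
  have s1 : s = 1%g by apply/permP => t; move/negbFE: (H1 t) => /eqP ->; rewrite perm1.
  by move: Hos; rewrite s1 order1 => Hp; move: Pp; rewrite -Hp.
set O := orbit 'P <[s]>%g t.
have HO : #|O| %| p by rewrite -Hos orderE; apply: dvdn_orbit.
have HO2 : 1 < #|O|.
  apply/card_gt1P; exists t, (s t); split; rewrite 1?eq_sym //; first exact: orbit_refl.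
  exact: (mem_orbit 'P t (cycle_id s)).
have HOp : #|O| = p.
  by case/primeP: Pp => _ /(_ _ HO) /pred2P [H|] //; rewrite H in HO2.
have Hsub : O \subset [set u : 'I_(size r) | nth 0 r u == nth 0 r t].
  apply/subsetP => u /orbitP [a Ha <-]; rewrite inE -[('P%act t a)]/(a t).
  have HsG : (<[s]> \subset Group (nth_stab_group r))%g by rewrite cycle_subG.
  by have := subsetP HsG a Ha; rewrite inE => /forallP /(_ t).
have := subset_leq_card Hsub; rewrite card_nth_eq HOp.
by rewrite leqNgt Hc // mem_nth.
Qed.

(** * Powers of a basis element *)

Lemma size_le_sumn (c : seq nat) : all (fun x => 0 < x) c -> size c <= sumn c.
Proof. by elim: c => //= x c IH /andP[Hx Hc]; rewrite -add1n leq_add ?IH. Qed.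

Section Powers.
Variables (R : nzSemiRingType) (n : nat) (r : seq nat).
Hypothesis r_comp : is_composition n r.
Local Open Scope ring_scope.
Local Notation x := (basisB R r).

Lemma fpowS_compositions k : all (fun a => is_composition n a.1) (fpowS x k).
Proof.
elim: k => [|k IH]; first by rewrite /= r_comp.
apply/allP => w /flattenP [s /allpairsP [[a b] /= [Ha Hb ->]]].
move=> /mapP [w' /mapP [Z HZ ->] ->] /=.
rewrite /is_composition compZ_pos sumn_compZ; case/mem_SmatP: HZ => _ _ -> _.
by case/andP: (allP IH a Ha).
Qed.

Let supp k := undup (r :: map fst (fpowS x k)).

Lemma supp_composition k q : q \in supp k -> is_composition n q.
Proof.
rewrite mem_undup inE => /orP [/eqP -> //| /mapP [a Ha ->]].
exact: (allP (fpowS_compositions k)).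
Qed.

Lemma coef_fpowSS k c :
  coef (fpowS x k.+1) c = \sum_(q <- supp k) coef (fpowS x k) q * (mulB_mult q r c)%:R.
Proof.
apply: coef_fmul_basisB; first exact: undup_uniq.
by move=> q Hq; rewrite mem_undup inE Hq orbT.
Qed.

Lemma coef_fpowS_short k c : (size c < size r)%N -> coef (fpowS x k) c = 0.
Proof.
elim: k c => [|k IH] c Hc.
  by rewrite coef_basisB; case: eqP => // E; rewrite E ltnn in Hc.
rewrite coef_fpowSS big1_seq // => q /andP[_ Hq].
case: (ltnP (size q) (size r)) => Hqr; first by rewrite IH // mul0r.
have /andP[q_pos _] := supp_composition Hq.
rewrite mulB_mult_eq0 ?mulr0 //; first exact: ltnW (leq_trans Hc Hqr).
by apply: contraTneq Hc => ->; rewrite -leqNgt.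
Qed.

Lemma coef_fpowS_diag k : coef (fpowS x k) r = (mulB_mult r r r)%:R ^+ k.
Proof.
elim: k => [|k IH]; first by rewrite coef_basisB eqxx expr0.
have Hr : r \in supp k by rewrite mem_undup mem_head.
rewrite coef_fpowSS (bigD1_seq _ Hr (undup_uniq _)) /= IH -exprSr big1_seq ?addr0 //.
move=> q /andP[Hqr Hq].
case: (ltnP (size q) (size r)) => Hlt; first by rewrite coef_fpowS_short // mul0r.
have /andP[q_pos _] := supp_composition Hq.
by rewrite mulB_mult_eq0 ?mulr0 // eq_sym.
Qed.

Hypothesis n_gt0 : (0 < n)%N.
Hypothesis diag_eq0 : forall q, is_composition n q -> (mulB_mult q r q)%:R = 0 :> R.

Lemma coef_fpowS_le k c : (size c <= k)%N -> coef (fpowS x k) c = 0.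
Proof.
elim: k c => [|k IH] c Hc.
  rewrite coef_basisB; case: eqP => // E; move: Hc; rewrite -E leqn0 size_eq0.
  by move=> /eqP r0; move: r_comp n_gt0; rewrite r0 /is_composition /= => /eqP <-.
rewrite coef_fpowSS big1_seq // => q /andP[_ Hq].
case: (leqP (size q) k) => Hqk; first by rewrite IH // mul0r.
have /andP[q_pos _] := supp_composition Hq.
case: (eqVneq c q) => [->|Hne]; first by rewrite diag_eq0 ?mulr0 // (supp_composition Hq).
by rewrite mulB_mult_eq0 ?mulr0 //; exact: leq_trans Hc Hqk.
Qed.

Lemma fpowS_eq0 c : coef (fpowS x n) c = 0.
Proof.
case: (leqP (size c) n) => H; first exact: coef_fpowS_le.
apply: coef_notin; apply/negP => /mapP [a Ha Ec].
have /andP[Hp /eqP Hs] := allP (fpowS_compositions n) a Ha.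
by move: H; rewrite Ec -Hs ltnNge size_le_sumn.
Qed.

End Powers.

Theorem lemma2p4 (n p : nat) (r : seq nat) :
  (1 <= n)%N -> prime p -> is_composition n r ->
  (fnilpotent (basisB 'F_p r) <->
   exists m : nat, (0 < m)%N /\ (p <= count_mem m r)%N).
Proof.
move=> n_gt0 p_pr r_comp; have /andP[r_pos _] := r_comp.
have charFp := pchar_Fp p_pr.
split => [[k Hk] | [m [_ Hm]]].
  have [/hasP [m Hmr Hm] | /hasPn Hno] := boolP (has (fun m => p <= count_mem m r)%N r).
    by exists m; split => //; exact: (allP r_pos).
  have diag_neq0 : ((mulB_mult r r r)%:R != 0 :> 'F_p)%R.
    rewrite mulB_mult_diag // card_merge_maps_diag // -(dvdn_pcharf charFp).
    by apply: ndvdn_card_nth_stab => // m' Hm'; rewrite ltnNge Hno.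
  move: (Hk r); rewrite (coef_fpowS_diag _ r_comp) => /eqP.
  by rewrite expf_eq0 (negbTE diag_neq0) andbF.
exists n; apply: fpowS_eq0 => // q /andP[q_pos _].
apply/eqP; rewrite mulB_mult_diag // -(dvdn_pcharf charFp).
exact: (dvdn_card_merge_maps q r_pos p_pr Hm).
Qed.
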